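(* Let $T$ be a spherically homogeneous rooted tree in which every vertex has at least $2$ children, and let $G\le\mathrm{Aut}~T$ be a weakly branch group admitting a finitely generated non-trivial normal subgroup $N$ of infinite index in $G$. Then $G$ does not have property $\mathrm{(LR)}$.
   Context: $\mathrm{Aut}~T$ is the group of automorphisms of $T$ fixing the root; $\mathcal{L}_n$ is the $n$th level; $T_v$ is the subtree of descendants of $v$. For $G\le\mathrm{Aut}~T$, $\mathrm{rist}_G(v)$ is the subgroup of elements of $G$ fixing every vertex outside $T_v$, and $\mathrm{Rist}_G(n)=\prod_{v\in\mathcal{L}_n}\mathrm{rist}_G(v)$. $G$ is weakly branch if it acts transitively on every level of $T$ and $\mathrm{Rist}_G(n)$ is infinite for every $n\ge1$. $H\le G$ is a virtual retract of $G$ if there is a finite-index $K\le G$ containing $H$ and a homomorphism $K\to H$ restricting to the identity on $H$; $G$ has $\mathrm{(LR)}$ if every finitely generated subgroup of $G$ is a virtual retract of $G$. *)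

From mathcomp Require Import all_boot.
From Stdlib Require List.
Set Implicit Arguments. Unset Strict Implicit. Unset Printing Implicit Defensive.

(* The spherically homogeneous rooted tree with branching sequence m:
   vertices at level n are words x_0 ... x_(n-1) with x_i < m i;
   the root is the empty word, the children of w are rcons w i, i < m (size w). *)
Definition vtx := seq nat.

Definition valid (m : nat -> nat) (w : vtx) : Prop :=
  forall i, i < size w -> nth 0 w i < m i.

Definition adj (v w : vtx) : Prop :=
  (exists i, w = rcons v i) \/ (exists i, v = rcons w i).

(* elements of Aut T: graph automorphisms of T fixing the root; by convention
   they act as the identity on words that are not vertices of T. *)
Definition is_aut (m : nat -> nat) (f : vtx -> vtx) : Prop :=
  [/\ forall w, ~ valid m w -> f w = w,
      forall w, valid m w -> valid m (f w),
      bijective f,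
      f [::] = [::] &
      forall v w, valid m v -> valid m w -> (adj v w <-> adj (f v) (f w))].

Definition aut_mul (g h : vtx -> vtx) : vtx -> vtx := fun x => g (h x).
Definition aut_id : vtx -> vtx := fun x => x.

Definition subset_g (A B : (vtx -> vtx) -> Prop) : Prop := forall g, A g -> B g.

Definition is_subgroup (m : nat -> nat) (G : (vtx -> vtx) -> Prop) : Prop :=
  [/\ subset_g G (is_aut m),
      G aut_id,
      forall g h, G g -> G h -> G (aut_mul g h) &
      forall g, G g -> exists h, [/\ G h, aut_mul h g = aut_id & aut_mul g h = aut_id]].

Definition is_normal (m : nat -> nat) (G N : (vtx -> vtx) -> Prop) : Prop :=
  [/\ is_subgroup m N, subset_g N G &
      forall g h n, G g -> aut_mul h g = aut_id -> aut_mul g h = aut_id ->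
        N n -> N (aut_mul g (aut_mul n h))].

Definition nontrivial (N : (vtx -> vtx) -> Prop) : Prop :=
  exists n, N n /\ n <> aut_id.

Definition fin_gen (m : nat -> nat) (H : (vtx -> vtx) -> Prop) : Prop :=
  exists S : list (vtx -> vtx),
    (forall s, List.In s S -> H s) /\
    forall K, is_subgroup m K -> (forall s, List.In s S -> K s) -> subset_g H K.

Definition finite_index (G K : (vtx -> vtx) -> Prop) : Prop :=
  exists L : list (vtx -> vtx),
    (forall l, List.In l L -> G l) /\
    forall g, G g -> exists l k, [/\ List.In l L, K k & g = aut_mul l k].

Definition infinite_set (S : (vtx -> vtx) -> Prop) : Prop :=
  forall L : list (vtx -> vtx), exists g, S g /\ ~ List.In g L.

Fixpoint level (m : nat -> nat) (n : nat) : seq vtx :=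
  match n with
  | 0 => [:: [::]]
  | n'.+1 => [seq rcons v i | v <- level m n', i <- iota 0 (m n')]
  end.

Definition rist (m : nat -> nat) (G : (vtx -> vtx) -> Prop) (v : vtx) (g : vtx -> vtx) : Prop :=
  G g /\ forall w, valid m w -> ~ prefix v w -> g w = w.

Definition Rist (m : nat -> nat) (G : (vtx -> vtx) -> Prop) (n : nat) (g : vtx -> vtx) : Prop :=
  exists f : vtx -> (vtx -> vtx),
    (forall v, v \in level m n -> rist m G v (f v)) /\
    g = foldr aut_mul aut_id [seq f v | v <- level m n].

Definition weakly_branch (m : nat -> nat) (G : (vtx -> vtx) -> Prop) : Prop :=
  (forall n u v, valid m u -> valid m v -> size u = n -> size v = n ->
     exists g, G g /\ g u = v) /\
  (forall n, 1 <= n -> infinite_set (Rist m G n)).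

Definition virtual_retract (m : nat -> nat) (G H : (vtx -> vtx) -> Prop) : Prop :=
  exists K, [/\ is_subgroup m K, subset_g K G, finite_index G K, subset_g H K &
    exists phi : (vtx -> vtx) -> (vtx -> vtx),
      [/\ forall k, K k -> H (phi k),
          forall a b, K a -> K b -> phi (aut_mul a b) = aut_mul (phi a) (phi b) &
          forall h, H h -> phi h = h]].

Definition has_LR (m : nat -> nat) (G : (vtx -> vtx) -> Prop) : Prop :=
  forall H, is_subgroup m H -> subset_g H G -> fin_gen m H -> virtual_retract m G H.

From mathcomp Require Import all_boot zify.
From Stdlib Require Import Classical FunctionalExtensionality.
Set Implicit Arguments. Unset Strict Implicit. Unset Printing Implicit Defensive.

(* Suppose N is a virtual retract, via phi : K -> N with N <= K of finite index.
   As N has infinite index there is k in K \ N, and r = phi(k)^-1 k is a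
   non-trivial element of ker phi; for n in N the commutator [r, n] lies in N
   and is killed by phi, so it is trivial and r centralizes N.  But in a weakly
   branch group a non-trivial normal subgroup N has trivial centralizer: if
   c <> 1 centralized N, a conjugate of c and an element of N would move a
   common vertex w, and a commutator computation would make rist_G(w) abelian,
   whereas the rigid stabilizers of a weakly branch group are never abelian. *)

Definition supp_in (g : vtx -> vtx) (P : pred vtx) : Prop :=
  forall x, g x <> x -> P x.

Definition centralizes (c : vtx -> vtx) (N : (vtx -> vtx) -> Prop) : Prop :=
  forall n, N n -> forall x, c (n x) = n (c x).

Lemma cancel_aut_mul (g h : vtx -> vtx) : cancel g h <-> aut_mul h g = aut_id.
Proof. by split=> [gK | E x]; [apply: functional_extensionality | apply: equal_f E x]. Qed.

Lemma moved_of_neq_id (g : vtx -> vtx) : g <> aut_id -> exists x, g x <> x.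
Proof.
move=> g_ne; apply: NNPP => no_moved; apply: g_ne; apply: functional_extensionality => x.
by apply: NNPP => gx_ne; apply: no_moved; exists x.
Qed.

Lemma supp_fixed g (P : pred vtx) x : supp_in g P -> ~~ P x -> g x = x.
Proof. by move=> Sg Px; apply: NNPP => /Sg; apply/negP. Qed.

Lemma supp_stable g (P : pred vtx) x : injective g -> supp_in g P -> P x -> P (g x).
Proof.
move=> g_inj Sg Px; have [-> //|gx_ne] := classic (g x = x).
by apply: Sg => /g_inj.
Qed.

Lemma supp_inv g g' (P : pred vtx) :
  injective g -> cancel g' g -> supp_in g P -> supp_in g' P.
Proof.
move=> g_inj g'K Sg x g'x_ne; apply: Sg => gx; apply: g'x_ne; apply: g_inj.
by rewrite g'K gx.
Qed.

Section TreeAutomorphisms.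

Variable m : nat -> nat.

Lemma valid_prefix v w : prefix v w -> valid m w -> valid m v.
Proof.
case/prefixP=> s -> Vw i lt_i; have := Vw i; rewrite size_cat nth_cat lt_i; apply.
exact: leq_trans lt_i (leq_addr _ _).
Qed.

Lemma valid_cat_nseq u k : (forall i, 0 < m i) -> valid m u -> valid m (u ++ nseq k 0).
Proof.
move=> m_gt0 Vu i; rewrite size_cat size_nseq nth_cat => lt_i.
by case: ifP => [/Vu //|_]; rewrite nth_nseq; case: ifP.
Qed.

Lemma level_valid n v : v \in level m n -> valid m v /\ size v = n.
Proof.
elim: n v => [|n IH] v /=; first by rewrite inE => /eqP ->; split => // i.
case/allpairsP => [[v' i] /= [/IH [Vv' <-] i_lt ->]].
split; last by rewrite size_rcons.
move=> k; rewrite size_rcons ltnS nth_rcons leq_eqVlt => /orP [/eqP ->|lt_k].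
  by rewrite ltnn eqxx; move: i_lt; rewrite mem_iota.
by rewrite lt_k; apply: Vv'.
Qed.

Lemma prefix_uniq_size (a b x : vtx) : prefix a x -> prefix b x -> size a = size b -> a = b.
Proof.
move=> /prefixP [s ->] /prefixP [t Et] Eab.
by have := congr1 (take (size a)) Et; rewrite take_size_cat // Eab take_size_cat.
Qed.

Lemma prefix_disjoint (a b x : vtx) : a <> b -> size a = size b -> prefix a x -> ~~ prefix b x.
Proof. by move=> a_ne_b Eab ax; apply/negP => bx; apply: a_ne_b (prefix_uniq_size ax bx Eab). Qed.

Variable f : vtx -> vtx.
Hypothesis f_aut : is_aut m f.

Lemma aut_moved_valid x : f x <> x -> valid m x.
Proof. by case: f_aut => f_inv _ _ _ _ fx_ne; apply: NNPP => /f_inv. Qed.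

Lemma aut_inj : injective f.
Proof. by case: f_aut => _ _ [g fK _] _ _; apply: can_inj fK. Qed.

Lemma aut_adj_rcons v i : valid m (rcons v i) ->
  (exists j, f (rcons v i) = rcons (f v) j) \/ (exists j, f v = rcons (f (rcons v i)) j).
Proof.
case: f_aut => _ _ _ _ f_adj Vw.
by apply: (f_adj _ _ (valid_prefix (prefix_rcons v i) Vw) Vw).1; left; exists i.
Qed.

(* Were f v a child of f (rcons v i), the image of the parent u of v, being
   adjacent to f v, would either equal f (rcons v i) or lie two levels below f u. *)
Lemma aut_child v i : valid m (rcons v i) ->
  (forall u, size u <= size v -> valid m u -> size (f u) = size u) ->
  exists j, f (rcons v i) = rcons (f v) j.
Proof.
move=> Vw f_size; have Vv := valid_prefix (prefix_rcons v i) Vw.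
case: (aut_adj_rcons Vw) => // -[j fv].
have szw : size (f (rcons v i)) = (size v).-1 by rewrite -(f_size v) // fv size_rcons.
case/lastP: v Vw Vv f_size fv szw => [|u k] Vw Vv f_size fv szw.
  by case: f_aut => _ _ _ f0 _; move/(congr1 size): fv; rewrite f0 size_rcons.
have szu : size (f u) = size u.
  by apply: f_size (valid_prefix (prefix_rcons u k) Vv); rewrite size_rcons.
case: (aut_adj_rcons Vv) => -[j' fj'].
  move: fv; rewrite fj' => /rcons_inj [/aut_inj /(congr1 size)].
  by rewrite !size_rcons; lia.
by move/(congr1 size): fj'; rewrite size_rcons szu f_size // size_rcons; lia.
Qed.

Lemma aut_size w : valid m w -> size (f w) = size w.
Proof.
have [n] := ubnP (size w); elim: n w => // n IH w lt_w.
case/lastP: w lt_w => [|v i] lt_w Vw; first by case: f_aut => _ _ _ -> _.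
rewrite size_rcons ltnS in lt_w.
have Vv := valid_prefix (prefix_rcons v i) Vw.
have [u le_u Vu|j ->] := aut_child Vw; first exact: IH (leq_ltn_trans le_u lt_w) Vu.
by rewrite !size_rcons IH.
Qed.

Lemma aut_rcons v i : valid m (rcons v i) -> exists j, f (rcons v i) = rcons (f v) j.
Proof. by move=> Vw; apply: aut_child => // u _; apply: aut_size. Qed.

Lemma aut_prefix v z : valid m z -> prefix v z -> prefix (f v) (f z).
Proof.
move=> Vz /prefixP [s Ez]; subst z.
elim/last_ind: s Vz => [|s i IH]; first by rewrite cats0 prefix_refl.
rewrite -rcons_cat => Vz; have [j ->] := aut_rcons Vz.
exact: prefix_trans (IH (valid_prefix (prefix_rcons _ _) Vz)) (prefix_rcons _ _).
Qed.

Lemma aut_moved_prefix u z : f u <> u -> valid m z -> prefix u z -> f z <> z.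
Proof.
move=> fu_ne Vz uz fz; have Vu := aut_moved_valid fu_ne; apply: fu_ne.
have := aut_prefix Vz uz; rewrite fz => fuz.
exact: prefix_uniq_size fuz uz (aut_size Vu).
Qed.

End TreeAutomorphisms.

Lemma aut_moved_at_level m f u n : (forall i, 0 < m i) -> is_aut m f ->
  f u <> u -> size u <= n -> exists w, [/\ valid m w, size w = n & f w <> w].
Proof.
move=> m_gt0 f_aut fu_ne le_u; exists (u ++ nseq (n - size u) 0).
have Vw := valid_cat_nseq (k := n - size u) m_gt0 (aut_moved_valid f_aut fu_ne).
split=> //; first by rewrite size_cat size_nseq subnKC.
exact: (aut_moved_prefix f_aut fu_ne Vw (prefix_prefix _ _)).
Qed.

Section Conjugation.

Variables (m : nat -> nat) (t t' g : vtx -> vtx).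
Hypotheses (t_aut : is_aut m t) (g_aut : is_aut m g) (t'K : cancel t' t).

Lemma supp_conj w : supp_in g (prefix w) -> supp_in (aut_mul t (aut_mul g t')) (prefix (t w)).
Proof.
move=> Sg x; rewrite /aut_mul => moved.
have gx_ne : g (t' x) <> t' x by move=> E; apply: moved; rewrite E t'K.
have := aut_prefix t_aut (aut_moved_valid g_aut gx_ne) (Sg _ gx_ne).
by rewrite t'K.
Qed.

Lemma conj_fixed_subtree w z : supp_in g (prefix w) -> t w <> w -> prefix w z ->
  t (g (t' z)) = z.
Proof.
move=> Sg tw_ne wz; apply: supp_fixed (supp_conj Sg) _.
have szw := aut_size t_aut (aut_moved_valid t_aut tw_ne).
exact: prefix_disjoint (not_eq_sym tw_ne) (esym szw) wz.
Qed.

End Conjugation.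

Section Subgroups.

Variables (m : nat -> nat) (G : (vtx -> vtx) -> Prop).
Hypothesis HG : is_subgroup m G.

Lemma subgroup_aut g : G g -> is_aut m g.
Proof. by case: HG => G_aut _ _ _; apply: G_aut. Qed.

Lemma subgroup_mul g h : G g -> G h -> G (aut_mul g h).
Proof. by case: HG => _ _ G_mul _; apply: G_mul. Qed.

Lemma subgroup_inv g : G g -> exists g', [/\ G g', cancel g g' & cancel g' g].
Proof.
case: HG => _ _ _ G_inv /G_inv [g' [Gg' g'g gg']].
by exists g'; split; rewrite // cancel_aut_mul.
Qed.

End Subgroups.

Section NormalSubgroups.

Variables (m : nat -> nat) (G N : (vtx -> vtx) -> Prop).
Hypotheses (HG : is_subgroup m G) (HN : is_normal m G N).

Lemma normal_subgroup : is_subgroup m N.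
Proof. by case: HN. Qed.

Lemma normal_sub : subset_g N G.
Proof. by case: HN. Qed.

Lemma normal_conj g g' n : G g -> cancel g g' -> cancel g' g -> N n ->
  N (aut_mul g (aut_mul n g')).
Proof. by case: HN => _ _ N_conj Gg /cancel_aut_mul g'g /cancel_aut_mul gg'; apply: N_conj. Qed.

Lemma centralizes_inv c c' : cancel c c' -> cancel c' c -> centralizes c N -> centralizes c' N.
Proof.
move=> cK c'K cN n Nn x.
by apply: (can_inj cK); rewrite (cN n Nn) !c'K.
Qed.

Lemma centralizes_mul c d : centralizes c N -> centralizes d N -> centralizes (aut_mul c d) N.
Proof. by move=> cN dN n Nn x; rewrite /aut_mul dN // cN. Qed.

Lemma centralizes_conj g g' c : G g' -> cancel g g' -> cancel g' g -> centralizes c N ->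
  centralizes (aut_mul g (aut_mul c g')) N.
Proof.
move=> Gg' gK g'K cN n Nn x; rewrite /aut_mul.
have Nn' := normal_conj Gg' g'K gK Nn.
by rewrite -{1}(g'K x); have := cN _ Nn' (g' x); rewrite /aut_mul => ->; rewrite g'K.
Qed.

(* x = nn g^-1 nn^-1 g lies in N and y = c h^-1 c^-1 h centralizes N, so x and y
   commute; below w they act as g and h, because nn g^-1 nn^-1 and c h^-1 c^-1
   only move vertices below nn w and c w. *)
Lemma rist_commute_of_moved nn c w g h :
  N nn -> G c -> centralizes c N -> nn w <> w -> c w <> w ->
  G g -> G h -> supp_in g (prefix w) -> supp_in h (prefix w) ->
  forall z, g (h z) = h (g z).
Proof.
move=> Nnn Gc cN nn_w c_w Gg Gh Sg Sh z.
have [g' [Gg' gK g'K]] := subgroup_inv HG Gg.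
have [h' [Gh' hK h'K]] := subgroup_inv HG Gh.
have [c' [Gc' cK c'K]] := subgroup_inv HG Gc.
have [nn' [Nnn' nnK nn'K]] := subgroup_inv normal_subgroup Nnn.
pose x := aut_mul nn (aut_mul g' (aut_mul nn' g)).
pose y := aut_mul c (aut_mul h' (aut_mul c' h)).
have Nx : N x := subgroup_mul normal_subgroup Nnn (normal_conj Gg' g'K gK Nnn').
have yN : centralizes y N.
  exact: centralizes_mul cN (centralizes_conj Gh h'K hK (centralizes_inv cK c'K cN)).
have g_inj := aut_inj (subgroup_aut HG Gg).
have h_inj := aut_inj (subgroup_aut HG Gh).
have x_on_w u : prefix w u -> x u = g u.
  move=> wu; apply: (conj_fixed_subtree (subgroup_aut HG (normal_sub Nnn))
    (subgroup_aut HG Gg') nn'K (supp_inv g_inj g'K Sg) nn_w).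
  exact: supp_stable g_inj Sg wu.
have y_on_w u : prefix w u -> y u = h u.
  move=> wu; apply: (conj_fixed_subtree (subgroup_aut HG Gc)
    (subgroup_aut HG Gh') c'K (supp_inv h_inj h'K Sh) c_w).
  exact: supp_stable h_inj Sh wu.
have [wz|wz] := boolP (prefix w z); last first.
  by rewrite (supp_fixed Sg wz) (supp_fixed Sh wz) (supp_fixed Sg wz).
have hz := supp_stable h_inj Sh wz.
have gz := supp_stable g_inj Sg wz.
by rewrite -(x_on_w _ hz) -(y_on_w _ gz) -(x_on_w _ wz) -(y_on_w _ wz) (yN _ Nx).
Qed.

End NormalSubgroups.

Lemma rist_supp m G v g : rist m G v g -> is_aut m g -> supp_in g (prefix v).
Proof.
move=> [_ fix_out] g_aut x gx_ne; apply: NNPP => vx.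
exact: gx_ne (fix_out _ (aut_moved_valid g_aut gx_ne) vx).
Qed.

Lemma foldr_aut_mul_id (f : vtx -> (vtx -> vtx)) (s : seq vtx) :
  (forall v, v \in s -> f v = aut_id) -> foldr aut_mul aut_id [seq f v | v <- s] = aut_id.
Proof.
elim: s => [//|a s IH] f_id /=.
by rewrite f_id ?mem_head // IH // => v vs; apply: f_id; rewrite inE vs orbT.
Qed.

Section WeaklyBranch.

Variables (m : nat -> nat) (G : (vtx -> vtx) -> Prop).
Hypotheses (HG : is_subgroup m G) (Hwb : weakly_branch m G).

Lemma rist_nontrivial_at_level n : 0 < n ->
  exists v g, [/\ v \in level m n, G g, g <> aut_id & supp_in g (prefix v)].
Proof.
move=> n_gt0; have [r [[f [f_rist ->]] r_ne]] := Hwb.2 n n_gt0 [:: aut_id].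
have [v [vn fv_ne]] : exists v, v \in level m n /\ f v <> aut_id.
  apply: NNPP => all_id; apply: r_ne; rewrite foldr_aut_mul_id; first by left.
  by move=> v vn; apply: NNPP => fv_ne; apply: all_id; exists v.
have [Gfv _] := f_rist v vn.
by exists v, (f v); split => //; apply: rist_supp (f_rist v vn) (subgroup_aut HG Gfv).
Qed.

Lemma rist_nontrivial y : valid m y -> 0 < size y ->
  exists g, [/\ G g, g <> aut_id & supp_in g (prefix y)].
Proof.
move=> Vy y_gt0; have [v [g [vn Gg g_ne Sg]]] := rist_nontrivial_at_level y_gt0.
have [Vv szv] := level_valid vn.
have [t [Gt <-]] := Hwb.1 _ _ _ Vv Vy szv erefl.
have [t' [Gt' tK t'K]] := subgroup_inv HG Gt.
exists (aut_mul t (aut_mul g t')); split.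
- exact: (subgroup_mul HG Gt (subgroup_mul HG Gg Gt')).
- move=> E; apply: g_ne; apply: functional_extensionality => x.
  by apply: (can_inj tK); have := equal_f E (t x); rewrite /aut_mul tK.
- exact: (supp_conj (subgroup_aut HG Gt) (subgroup_aut HG Gg) t'K Sg).
Qed.

(* If g moves x inside the subtree at w and h in rist(x) is nontrivial, then
   g h g^-1 lives in the disjoint subtree at g x, so it cannot equal h. *)
Lemma rist_noncommutative w : valid m w -> 0 < size w ->
  ~ (forall g h, G g -> G h -> supp_in g (prefix w) -> supp_in h (prefix w) ->
       forall z, g (h z) = h (g z)).
Proof.
move=> Vw w_gt0 rist_comm.
have [g [Gg g_ne Sg]] := rist_nontrivial Vw w_gt0.
have g_aut := subgroup_aut HG Gg.
have [x gx_ne] := moved_of_neq_id g_ne.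
have Vx := aut_moved_valid g_aut gx_ne.
have wx := Sg _ gx_ne.
have [h [Gh h_ne Sh]] := rist_nontrivial Vx (leq_trans w_gt0 (size_prefix wx)).
have [g' [Gg' gK g'K]] := subgroup_inv HG Gg.
have Shgx : supp_in h (prefix (g x)).
  move=> z hz_ne; have := supp_conj g_aut (subgroup_aut HG Gh) g'K Sh.
  apply; rewrite /aut_mul rist_comm ?g'K //.
  by move=> z' /Sh; apply: prefix_trans wx.
apply: h_ne; apply: functional_extensionality => z; apply: NNPP => hz_ne.
have := prefix_disjoint (not_eq_sym gx_ne) (esym (aut_size g_aut Vx)) (Sh _ hz_ne).
by move/negP; apply; apply: Shgx.
Qed.

End WeaklyBranch.

Lemma centralizer_normal_trivial m G N c : (forall i, 0 < m i) ->
  is_subgroup m G -> weakly_branch m G -> is_normal m G N -> nontrivial N ->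
  G c -> centralizes c N -> c = aut_id.
Proof.
move=> m_gt0 HG Hwb HN [n0 [Nn0 n0_ne]] Gc cN; apply: NNPP => c_ne.
have [u0 n0u0] := moved_of_neq_id n0_ne.
have [v0 cv0] := moved_of_neq_id c_ne.
pose M := (maxn (size u0) (size v0)).+1.
have u0M : size u0 <= M by rewrite ltnW // ltnS leq_maxl.
have v0M : size v0 <= M by rewrite ltnW // ltnS leq_maxr.
have [u [Vu szu n0u]] :=
  aut_moved_at_level m_gt0 (subgroup_aut HG (normal_sub HN Nn0)) n0u0 u0M.
have [v [Vv szv cv]] := aut_moved_at_level m_gt0 (subgroup_aut HG Gc) cv0 v0M.
have [t [Gt tv]] := Hwb.1 M v u Vv Vu szv szu.
have [t' [Gt' tK t'K]] := subgroup_inv HG Gt.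
pose c' := aut_mul t (aut_mul c t').
have Gc' : G c' := subgroup_mul HG Gt (subgroup_mul HG Gc Gt').
have c'u : c' u <> u by rewrite -tv /c' /aut_mul tK => /(aut_inj (subgroup_aut HG Gt)).
have c'N : centralizes c' N := centralizes_conj HN Gt' tK t'K cN.
apply: (rist_noncommutative HG Hwb Vu); first by rewrite szu.
move=> g h; exact: (rist_commute_of_moved HG HN Nn0 Gc' c'N n0u c'u).
Qed.

Lemma finite_index_subset G K H : finite_index G K -> subset_g K H -> finite_index G H.
Proof.
move=> [L [LG cover]] KH; exists L; split=> // g /cover [l [k [Ll Kk ->]]].
by exists l, k; split=> //; apply: KH.
Qed.

Section Retraction.

Variables (m : nat -> nat) (G N K : (vtx -> vtx) -> Prop) (phi : (vtx -> vtx) -> vtx -> vtx).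
Hypotheses (HN : is_normal m G N) (HK : is_subgroup m K) (KG : subset_g K G) (NK : subset_g N K).
Hypotheses (phiK : forall k, K k -> N (phi k))
  (phiM : forall a b, K a -> K b -> phi (aut_mul a b) = aut_mul (phi a) (phi b))
  (phi_id : forall n, N n -> phi n = n).

Lemma retraction_kernel_inv r r' : K r -> K r' -> cancel r r' -> phi r = aut_id -> phi r' = aut_id.
Proof.
move=> Kr Kr' rK phir.
have <- : phi (aut_mul r' r) = phi r' by rewrite phiM // phir.
rewrite (proj1 (cancel_aut_mul r r') rK) phi_id //.
by case: (normal_subgroup HN).
Qed.

Lemma retraction_kernel_centralizes r : K r -> phi r = aut_id -> centralizes r N.
Proof.
move=> Kr phir n Nn z.
have HN_sub := normal_subgroup HN.
have [r' [Kr' rK r'K]] := subgroup_inv HK Kr.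
have [n' [Nn' nK n'K]] := subgroup_inv HN_sub Nn.
have phir' := retraction_kernel_inv Kr Kr' rK phir.
pose x := aut_mul r (aut_mul n (aut_mul r' n')).
have Nx : N x := subgroup_mul HN_sub (normal_conj HN (KG Kr) rK r'K Nn) Nn'.
have x_id : x = aut_id.
  have Kn := NK Nn; have Kn' := NK Nn'.
  have Kr'n' := subgroup_mul HK Kr' Kn'.
  rewrite -(phi_id Nx) /x (phiM Kr (subgroup_mul HK Kn Kr'n')) (phiM Kn Kr'n') (phiM Kr' Kn').
  rewrite phir phir' (phi_id Nn) (phi_id Nn').
  exact: (proj1 (cancel_aut_mul n' n) n'K).
by have := equal_f x_id (n (r z)); rewrite /x /aut_mul nK rK.
Qed.

Lemma retraction_kernel_nontrivial : ~ subset_g K N ->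
  exists r, [/\ K r, r <> aut_id & phi r = aut_id].
Proof.
move=> KN; have [k [Kk Nk]] : exists k, K k /\ ~ N k.
  by apply: NNPP => all_N; apply: KN => k Kk; apply: NNPP => Nk; apply: all_N; exists k.
have [p' [Np' pK p'K]] := subgroup_inv (normal_subgroup HN) (phiK Kk).
exists (aut_mul p' k); split.
- exact: (subgroup_mul HK (NK Np') Kk).
- move=> E; apply: Nk; have -> : k = phi k; last exact: phiK.
  apply: functional_extensionality => z; have kz : p' (k z) = z := equal_f E z.
  by rewrite -{1}(p'K (k z)) kz.
- by rewrite (phiM (NK Np') Kk) (phi_id Np'); apply/cancel_aut_mul.
Qed.

End Retraction.

Lemma virtual_retract_normal_centralizer m G N : is_normal m G N -> ~ finite_index G N ->
  virtual_retract m G N -> exists c, [/\ G c, c <> aut_id & centralizes c N].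
Proof.
move=> HN N_inf [K [HK KG Kfi NK [phi [phiK phiM phi_id]]]].
have [|r [Kr r_ne phir]] := retraction_kernel_nontrivial HN HK NK phiK phiM phi_id.
  by move=> KN; apply: N_inf (finite_index_subset Kfi KN).
exists r; split=> //; first exact: KG.
exact: (retraction_kernel_centralizes HN HK KG NK phiM phi_id Kr phir).
Qed.

Theorem corollary3p4 (m : nat -> nat) (Hm : forall n, 2 <= m n)
  (G : (vtx -> vtx) -> Prop) (HG : is_subgroup m G) (Hwb : weakly_branch m G)
  (N : (vtx -> vtx) -> Prop) (HN : is_normal m G N) (HNfg : fin_gen m N)
  (HNnt : nontrivial N) (HNinf : ~ finite_index G N) :
  ~ has_LR m G.
Proof.
move=> HLR; have m_gt0 i : 0 < m i := ltnW (Hm i).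
have [c [Gc c_ne cN]] := virtual_retract_normal_centralizer HN HNinf
  (HLR N (normal_subgroup HN) (normal_sub HN) HNfg).
exact: c_ne (centralizer_normal_trivial m_gt0 HG Hwb HN HNnt Gc cN).
Qed.
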